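(* Under the hypotheses of Proposition 3 (two-system setup with a steady-state map $x_2^s$ defined on all of $\mathbb{R}^{n_1}$; $f_1,f_2$ globally Lipschitz; symmetric positive definite $P_1,Q_1,P_2,Q_2$ with $P_1\nabla_{x_1}f_1^r(x_1)+\nabla_{x_1}f_1^r(x_1)^TP_1\preceq -Q_1$ and $P_2\nabla_{x_2}f_2(x_1,x_2)+\nabla_{x_2}f_2(x_1,x_2)^TP_2\preceq -Q_2$ for all $x_1,x_2$), for $\theta>0$ define $$V(x_1,x_2)=\|f_1^r(x_1)\|_{P_1}^2+\theta\,\|f_2(x_1,x_2)\|_{P_2}^2 .$$ Then there exists $\nu>0$, independent of $\theta$, such that for every $\theta>0$ and all $(x_1,x_2)$, the derivative of $V$ along the predictive-sensitivity vector field satisfies $$\dot V(x_1,x_2)\le -\begin{bmatrix}\|f_2(x_1,x_2)\|_{P_2}\\ \|f_1^r(x_1)\|_{P_1}\end{bmatrix}^T\begin{bmatrix}\frac{\theta\lambda_{\min}(Q_2)}{\|P_2\|_2} & -\nu\\ -\nu & \frac{\lambda_{\min}(Q_1)}{\|P_1\|_2}\end{bmatrix}\begin{bmatrix}\|f_2(x_1,x_2)\|_{P_2}\\ \|f_1^r(x_1)\|_{P_1}\end{bmatrix}.$$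
   Context: Two-system setup: Let $f_1:\mathbb{R}^{n_1}\times\mathbb{R}^{n_2}\to\mathbb{R}^{n_1}$ and $f_2:\mathbb{R}^{n_1}\times\mathbb{R}^{n_2}\to\mathbb{R}^{n_2}$ be continuously differentiable, and assume $\nabla_{x_2}f_2(x_1,x_2)$ is invertible for all $(x_1,x_2)$. Define the extended sensitivity $S_{x_1}^{x_2}(x_1,x_2):=-\nabla_{x_2}f_2(x_1,x_2)^{-1}\nabla_{x_1}f_2(x_1,x_2)\in\mathbb{R}^{n_2\times n_1}$. The predictive-sensitivity system is $\dot x_1=f_1(x_1,x_2)$, $\dot x_2=f_2(x_1,x_2)+S_{x_1}^{x_2}(x_1,x_2)f_1(x_1,x_2)$; it is assumed that this right-hand side is locally Lipschitz continuous. A steady-state map is a continuously differentiable map $x_2^s$ with $f_2(x_1,x_2^s(x_1))=0$. The reduced vector field is $f_1^r(x_1):=f_1(x_1,x_2^s(x_1))$, with Jacobian $\nabla_{x_1}f_1^r(x_1)=\nabla_{x_1}f_1(x_1,x_2^s(x_1))+\nabla_{x_2}f_1(x_1,x_2^s(x_1))\nabla_{x_1}x_2^s(x_1)$. $\|x\|_P^2=x^TPx$, $\|P\|_2=\lambda_{\max}(P)$, $\lambda_{\min}$ the smallest eigenvalue. $\dot V=\nabla V^T F$ where $F$ is the predictive-sensitivity vector field. *)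

From HB Require Import structures.
From mathcomp Require Import all_boot all_order all_algebra.
From mathcomp Require Import all_classical all_reals all_analysis.
Set Implicit Arguments. Unset Strict Implicit. Unset Printing Implicit Defensive.
Import Order.TTheory GRing.Theory Num.Theory.
Import numFieldNormedType.Exports.
Local Open Scope classical_set_scope.
Local Open Scope ring_scope.

Section PS.
Variable R : realType.

(* Paper-convention Jacobian (rows = outputs, columns = inputs):
   transpose of the library's 'J f p, for which 'D_v f p = v *m 'J f p. *)
Definition Jac n m (f : 'rV[R]_n -> 'rV[R]_m) (p : 'rV[R]_n) : 'M[R]_(m, n) :=
  (jacobian f p)^T.

Definition Jac1 n1 n2 m (f : 'rV[R]_n1 -> 'rV[R]_n2 -> 'rV[R]_m) x1 x2 :=
  Jac (fun y => f y x2) x1.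
Definition Jac2 n1 n2 m (f : 'rV[R]_n1 -> 'rV[R]_n2 -> 'rV[R]_m) x1 x2 :=
  Jac (fun y => f x1 y) x2.

Definition uncurry2 n1 n2 m (f : 'rV[R]_n1 -> 'rV[R]_n2 -> 'rV[R]_m)
  (z : 'rV[R]_(n1 + n2)) : 'rV[R]_m := f (lsubmx z) (rsubmx z).

Definition C1 n m (g : 'rV[R]_n -> 'rV[R]_m) :=
  (forall p, differentiable g p) /\ continuous (jacobian g).

Definition C1_2 n1 n2 m (f : 'rV[R]_n1 -> 'rV[R]_n2 -> 'rV[R]_m) :=
  C1 (uncurry2 f).

Definition globally_lipschitz n m (g : 'rV[R]_n -> 'rV[R]_m) :=
  exists L : R, forall z z', `|g z - g z'| <= L * `|z - z'|.

Definition locally_lipschitz n m (g : 'rV[R]_n -> 'rV[R]_m) :=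
  forall z, exists2 r : R, 0 < r & exists L : R,
    forall z1 z2, ball z r z1 -> ball z r z2 -> `|g z1 - g z2| <= L * `|z1 - z2|.

Definition sens n1 n2 (f2 : 'rV[R]_n1 -> 'rV[R]_n2 -> 'rV[R]_n2) x1 x2
  : 'M[R]_(n2, n1) :=
  - (invmx (Jac2 f2 x1 x2) *m Jac1 f2 x1 x2).

Definition ps_field n1 n2 (f1 : 'rV[R]_n1 -> 'rV[R]_n2 -> 'rV[R]_n1)
  (f2 : 'rV[R]_n1 -> 'rV[R]_n2 -> 'rV[R]_n2) (z : 'rV[R]_(n1 + n2))
  : 'rV[R]_(n1 + n2) :=
  let x1 := lsubmx z in let x2 := rsubmx z in
  row_mx (f1 x1 x2) (f2 x1 x2 + (sens f2 x1 x2 *m (f1 x1 x2)^T)^T).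

Definition qf n (A : 'M[R]_n) (x : 'rV[R]_n) : R := (x *m A *m x^T) 0 0.

Definition sym_pd n (P : 'M[R]_n) :=
  P^T = P /\ forall x : 'rV[R]_n, x != 0 -> 0 < qf P x.

Definition loewner_le n (A B : 'M[R]_n) := forall x : 'rV[R]_n, qf A x <= qf B x.

Definition wnorm n (P : 'M[R]_n) (x : 'rV[R]_n) : R := Num.sqrt (qf P x).

Definition lambda_min n (A : 'M[R]_n) : R := inf [set a : R | eigenvalue A a].
Definition lambda_max n (A : 'M[R]_n) : R := sup [set a : R | eigenvalue A a].
(* ||P||_2 := lambda_max(P) (P symmetric positive definite) *)
Definition norm2 n (A : 'M[R]_n) : R := lambda_max A.

Definition Vfun n1 n2 (P1 : 'M[R]_n1) (P2 : 'M[R]_n2)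
  (f1 : 'rV[R]_n1 -> 'rV[R]_n2 -> 'rV[R]_n1)
  (f2 : 'rV[R]_n1 -> 'rV[R]_n2 -> 'rV[R]_n2) (x2s : 'rV[R]_n1 -> 'rV[R]_n2)
  (theta : R) (z : 'rV[R]_(n1 + n2)) : R :=
  let x1 := lsubmx z in let x2 := rsubmx z in
  wnorm P1 (f1 x1 (x2s x1)) ^+ 2 + theta * wnorm P2 (f2 x1 x2) ^+ 2.

End PS.

From HB Require Import structures.
From mathcomp Require Import all_boot all_order all_algebra.
From mathcomp Require Import all_classical all_reals all_analysis.
From mathcomp Require Import ring lra.
Import Order.TTheory GRing.Theory Num.Theory.
Import numFieldNormedType.Exports.
Local Open Scope classical_set_scope.
Local Open Scope ring_scope.

Set Implicit Arguments. Unset Strict Implicit. Unset Printing Implicit Defensive.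

(* Write F(x1) = f1(x1, x2s(x1)) for the reduced field, J2 = D_{x2} f2(x1,x2) and
   e = f1(x1,x2) - F(x1).  Along the PS field the sensitivity correction makes
   d/dt f2(x1,x2) = J2 f2(x1,x2) (lemma [diff_f2_along_ps]), so that
     dV = 2 <F, DF (F + e)>_{P1} + 2 theta <f2, J2 f2>_{P2}.
   The two diagonal terms are bounded through the Lyapunov inequalities and the
   Rayleigh bounds  lambda_min(Q)|x|^2 <= x^T Q x,  x^T P x <= ||P||_2 |x|^2  (lemma
   [lyapunov_decay]).  The cross term <F, DF e>_{P1} is bounded by Cauchy-Schwarz, the
   Lipschitz constant of F and the steady-state estimate |x2 - x2s(x1)| <= K ||f2||_{P2}
   ([steady_state_error]), itself a mean-value-theorem consequence of the uniform strong
   monotonicity of f2 in x2.  None of these constants depends on theta. *)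

Section MatrixNorms.
Variable R : realType.

(* The norm of a matrix is the maximum of the absolute values of its entries. *)
Lemma mxnorm_entry m n (A : 'M[R]_(m, n)) i j : `|A i j| <= `|A|.
Proof.
rewrite [leRHS]/Num.Def.normr /= mx_normrE.
by apply: le_trans (le_bigmax _ _ (i, j)).
Qed.

Lemma mxnorm_le m n (A : 'M[R]_(m, n)) c : 0 <= c ->
  (forall i j, `|A i j| <= c) -> `|A| <= c.
Proof.
move=> c0 Ac; rewrite [leLHS]/Num.Def.normr /= mx_normrE.
by apply: bigmax_le => // -[i j] _; apply: Ac.
Qed.

Lemma norm_row_mx n1 n2 (a : 'rV[R]_n1) (b : 'rV[R]_n2) :
  `|row_mx a b| <= `|a| + `|b|.
Proof.
apply: mxnorm_le; first by rewrite addr_ge0.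
move=> i j; rewrite -[j]fintype.splitK; case: (fintype.split j) => k /=.
  by rewrite row_mxEl (le_trans (mxnorm_entry _ _ _)) // lerDl.
by rewrite row_mxEr (le_trans (mxnorm_entry _ _ _)) // lerDr.
Qed.

Lemma norm_mulmx n m (y : 'rV[R]_n) (M : 'M[R]_(n, m)) :
  `|y *m M| <= (n%:R * `|M|) * `|y|.
Proof.
apply: mxnorm_le; first by rewrite !mulr_ge0.
move=> i j; rewrite mxE (le_trans (ler_norm_sum _ _ _)) //.
apply: le_trans (_ : \sum_(k < n) `|M| * `|y| <= _).
  apply: ler_sum => k _; rewrite normrM mulrC.
  by apply: ler_pM => //; apply: mxnorm_entry.
by rewrite sumr_const card_ord -mulrA mulr_natl.
Qed.

Lemma globally_lipschitz_ge0 n m (g : 'rV[R]_n -> 'rV[R]_m) : globally_lipschitz g ->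
  exists2 L, 0 <= L & forall z z', `|g z - g z'| <= L * `|z - z'|.
Proof.
move=> [L gL]; exists `|L|; first exact: normr_ge0.
move=> z z'; apply: le_trans (gL z z') _.
by rewrite ler_wpM2r // real_ler_norm // num_real.
Qed.

Lemma uncurry2_row n1 n2 m (f : 'rV[R]_n1 -> 'rV[R]_n2 -> 'rV[R]_m) a b :
  uncurry2 f (row_mx a b) = f a b.
Proof. by rewrite /uncurry2 row_mxKl row_mxKr. Qed.

Lemma lipschitz2 n1 n2 m (f : 'rV[R]_n1 -> 'rV[R]_n2 -> 'rV[R]_m) L :
  0 <= L -> (forall z z', `|uncurry2 f z - uncurry2 f z'| <= L * `|z - z'|) ->
  forall a b c d, `|f a b - f c d| <= L * (`|a - c| + `|b - d|).
Proof.
move=> L0 fL a b c d; rewrite -(uncurry2_row f a b) -(uncurry2_row f c d).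
apply: le_trans (fL _ _) _; rewrite opp_row_mx add_row_mx ler_wpM2l //.
exact: norm_row_mx.
Qed.

End MatrixNorms.

Section Forms.
Variable R : realType.

Definition bform n (A : 'M[R]_n) (x y : 'rV[R]_n) : R := (x *m A *m y^T) 0 0.

Lemma qf_bform n (A : 'M[R]_n) x : qf A x = bform A x x.
Proof. by []. Qed.

Lemma bform_sum n (A : 'M[R]_n) x y : bform A x y = \sum_i (x *m A) 0 i * y 0 i.
Proof. by rewrite /bform mxE; apply: eq_bigr => i _; rewrite [y^T _ _]mxE. Qed.

Lemma bform_tr n (A : 'M[R]_n) x y : bform A x y = bform A^T y x.
Proof.
have tr11 (M : 'M[R]_1) : M 0 0 = M^T 0 0 by rewrite mxE.
by rewrite /bform tr11 !trmx_mul trmxK mulmxA.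
Qed.

Lemma bform_sym n (A : 'M[R]_n) x y : A^T = A -> bform A x y = bform A y x.
Proof. by move=> AT; rewrite bform_tr AT. Qed.

Lemma bformDl n (A : 'M[R]_n) x1 x2 y : bform A (x1 + x2) y = bform A x1 y + bform A x2 y.
Proof. by rewrite /bform !mulmxDl mxE. Qed.

Lemma bformDr n (A : 'M[R]_n) x y1 y2 : bform A x (y1 + y2) = bform A x y1 + bform A x y2.
Proof. by rewrite /bform linearD /= mulmxDr mxE. Qed.

Lemma bformZl n (A : 'M[R]_n) a x y : bform A (a *: x) y = a * bform A x y.
Proof. by rewrite /bform -!scalemxAl mxE. Qed.

Lemma bformZr n (A : 'M[R]_n) a x y : bform A x (a *: y) = a * bform A x y.
Proof. by rewrite /bform linearZ /= -scalemxAr mxE. Qed.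

Lemma bformNl n (A : 'M[R]_n) x y : bform A (- x) y = - bform A x y.
Proof. by rewrite -scaleN1r bformZl mulN1r. Qed.

Lemma bformNr n (A : 'M[R]_n) x y : bform A x (- y) = - bform A x y.
Proof. by rewrite -scaleN1r bformZr mulN1r. Qed.

Lemma bform0r n (A : 'M[R]_n) x : bform A x 0 = 0.
Proof. by rewrite /bform trmx0 mulmx0 mxE. Qed.

Lemma qf0 n (A : 'M[R]_n) : qf A 0 = 0.
Proof. by rewrite /qf !mul0mx mxE. Qed.

Lemma qfZ n (A : 'M[R]_n) a x : qf A (a *: x) = a ^+ 2 * qf A x.
Proof. by rewrite !qf_bform bformZl bformZr mulrA expr2. Qed.

Lemma qfD n (A B : 'M[R]_n) x : qf (A + B) x = qf A x + qf B x.
Proof. by rewrite /qf mulmxDr mulmxDl mxE. Qed.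

Lemma qfN n (A : 'M[R]_n) x : qf (- A) x = - qf A x.
Proof. by rewrite /qf mulmxN mulNmx mxE. Qed.

Lemma qf_tr n (A : 'M[R]_n) x : qf A^T x = qf A x.
Proof. by rewrite !qf_bform -bform_tr. Qed.

Lemma qf_line n (A : 'M[R]_n) x w t : A^T = A ->
  qf A (x + t *: w) = qf A x + 2 * t * bform A x w + t ^+ 2 * qf A w.
Proof.
move=> AT; rewrite !qf_bform bformDl !bformDr !bformZl !bformZr (bform_sym x w AT).
by rewrite expr2; ring.
Qed.

Lemma bform_mulmx n (P J : 'M[R]_n) d : bform P d (d *m J^T) = qf (P *m J) d.
Proof. by rewrite /bform /qf trmx_mul trmxK !mulmxA. Qed.

Lemma qf_lyapunov n (P J : 'M[R]_n) d : P^T = P ->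
  qf (P *m J + J^T *m P) d = 2 * qf (P *m J) d.
Proof.
move=> PT; rewrite qfD.
have -> : J^T *m P = (P *m J)^T by rewrite trmx_mul PT.
by rewrite qf_tr mulr2n mulrDl mul1r.
Qed.

Lemma qf_ge0 n (P : 'M[R]_n) x : sym_pd P -> 0 <= qf P x.
Proof.
move=> [_ Ppd]; have [->|x0] := eqVneq x 0; first by rewrite qf0.
exact/ltW/Ppd.
Qed.

Lemma wnorm_ge0 n (P : 'M[R]_n) x : 0 <= wnorm P x.
Proof. exact: sqrtr_ge0. Qed.

Lemma wnorm_sqr n (P : 'M[R]_n) x : sym_pd P -> wnorm P x ^+ 2 = qf P x.
Proof. by move=> Ppd; rewrite /wnorm sqr_sqrtr // qf_ge0. Qed.

Lemma cauchy_schwarz n (P : 'M[R]_n) x y : sym_pd P ->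
  `|bform P x y| <= wnorm P x * wnorm P y.
Proof.
move=> Ppd; have [->|y0] := eqVneq y 0.
  by rewrite bform0r normr0 mulr_ge0 // wnorm_ge0.
have c0 : 0 < qf P y by apply: Ppd.2.
set a := qf P x; set b := bform P x y; set c := qf P y.
have disc : b ^+ 2 <= a * c.
  pose t := - b / c.
  have tc : t * c = - b by rewrite /t divfK // gt_eqF.
  have := qf_ge0 (x + t *: y) Ppd; rewrite (qf_line _ _ _ Ppd.1) -/a -/b -/c => h.
  have h2 : 0 <= (a + 2 * t * b + t ^+ 2 * c) * c by rewrite mulr_ge0 // ltW.
  have expand : (a + 2 * t * b + t ^+ 2 * c) * c =
      a * c + 2 * (t * c) * b + (t * c) ^+ 2 by ring.
  rewrite expand tc in h2; lra.
rewrite /wnorm -/a -/c -sqrtrM ?qf_ge0 // -sqrtr_sqr.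
exact: ler_wsqrtr.
Qed.

Definition sqnorm n (x : 'rV[R]_n) := qf 1%:M x.

Lemma sqnorm_sum n (x : 'rV[R]_n) : sqnorm x = \sum_i x 0 i ^+ 2.
Proof. by rewrite /sqnorm qf_bform bform_sum mulmx1; apply: eq_bigr => i _; rewrite expr2. Qed.

Lemma sqnorm_ge0 n (x : 'rV[R]_n) : 0 <= sqnorm x.
Proof. by rewrite sqnorm_sum sumr_ge0 // => i _; rewrite sqr_ge0. Qed.

Lemma sqnorm_ge n (x : 'rV[R]_n) : `|x| ^+ 2 <= sqnorm x.
Proof.
have [x0|x0] := eqVneq `|x| 0; first by rewrite x0 expr0n /= sqnorm_ge0.
have [[i j] /= xij] := mx_norm_neq0 x0.
have -> : `|x| = `|x i j| by exact: xij.
rewrite /= sqnorm_sum (bigD1 j) //= ord1 real_normK ?num_real //.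
by rewrite lerDl sumr_ge0 // => k _; rewrite sqr_ge0.
Qed.

Lemma sqnorm_le n (x : 'rV[R]_n) : sqnorm x <= n%:R * `|x| ^+ 2.
Proof.
rewrite sqnorm_sum; apply: le_trans (_ : \sum_(i < n) `|x| ^+ 2 <= _).
  apply: ler_sum => i _; rewrite -real_normK ?num_real //.
  by rewrite lerXn2r ?nnegrE // mxnorm_entry.
by rewrite sumr_const card_ord mulr_natl.
Qed.

Lemma sqnorm_gt0 n (x : 'rV[R]_n) : x != 0 -> 0 < sqnorm x.
Proof.
move=> x0; rewrite lt_def sqnorm_ge0 andbT; apply: contra x0 => /eqP sx0.
have := sqnorm_ge x; rewrite sx0 -normr_eq0 => nx.
by rewrite -sqrf_eq0 eq_le nx sqr_ge0.
Qed.

End Forms.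

Section Calculus.
Variable R : realType.

Lemma is_derive_affine (V W : normedModType R) (f L : V -> W) x v :
  (forall a u w, f (a *: u + w) = a *: L u + f w) -> is_derive x v f (L v).
Proof.
move=> f_aff.
have quot : \forall h \near (0 : R)^', h^-1 *: ((f \o shift x) (h *: v) - f x) = L v.
  near=> h; rewrite /= f_aff addrK scalerA mulVf ?scale1r //.
  by near: h; exact: nbhs_dnbhs_neq.
split; first by apply: (is_cvg_near_cst (L v)).
by apply/lim_near_cst.
Unshelve. all: by end_near. Qed.

Lemma is_derive_linear (V W : normedModType R) (f : V -> W) x v :
  (forall a u w, f (a *: u + w) = a *: f u + f w) -> is_derive x v f (f v).
Proof. exact: is_derive_affine. Qed.

Lemma mulmxr_continuous n m (M : 'M[R]_(n, m)) :
  continuous (fun y : 'rV[R]_n => y *m M).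
Proof.
apply: (@bounded_linear_continuous _ _ _ (mulmxr M)); apply/linear_boundedP.
near=> r.
have rM : n%:R * `|M| <= r by near: r; apply: nbhs_pinfty_ge; exact: num_real.
by move=> y; apply: le_trans (norm_mulmx y M) _; rewrite ler_wpM2r.
Unshelve. all: by end_near. Qed.

Lemma diff_mulmxr n m (M : 'M[R]_(n, m)) x :
  differentiable (fun y : 'rV[R]_n => y *m M) x /\
  'd (fun y : 'rV[R]_n => y *m M) x = (fun y => y *m M) :> ('rV[R]_n -> 'rV[R]_m).
Proof.
have Mc : continuous (mulmxr M : 'rV[R]_n -> 'rV[R]_m) by exact: mulmxr_continuous.
split; first exact: (@linear_differentiable R _ _ (mulmxr M) x Mc).
by rewrite (@diff_lin R _ _ (mulmxr M)).
Qed.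

Lemma diff_affine n m (M : 'M[R]_(n, m)) c x :
  differentiable (fun y : 'rV[R]_n => y *m M + c) x /\
  'd (fun y : 'rV[R]_n => y *m M + c) x = (fun y => y *m M) :> ('rV[R]_n -> 'rV[R]_m).
Proof.
have dM := (diff_mulmxr M x).1.
have dA : differentiable (fun y => y *m M + c) x.
  exact: differentiableD dM (differentiable_cst c x).
split=> //; apply/funext => v; rewrite -(deriveE v dA).
have D : is_derive x v (fun y => y *m M + c) (v *m M).
  apply: (is_derive_affine (L := fun u => u *m M)) => a u w.
  by rewrite mulmxDl -scalemxAl addrA.
by case: D.
Qed.

Lemma diff_line n (d y0 : 'rV[R]_n) t :
  differentiable (fun s : R => s *: d + y0) t /\ 'd (fun s : R => s *: d + y0) t 1 = d.
Proof.
have D : is_derive t 1 (fun s : R => s *: d + y0) ((fun u : R => u *: d) 1).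
  apply: (is_derive_affine (L := fun u : R => u *: d)) => a u w.
  by rewrite scalerDl scalerA addrA.
have dl : differentiable (fun s : R => s *: d + y0) t by apply/derivable1_diffP; case: D.
split=> //; rewrite -(deriveE (1 : R) dl); case: D => _ ->; exact: scale1r.
Qed.

Lemma diff_Jac n m (f : 'rV[R]_n -> 'rV[R]_m) p v : 'd f p v = v *m (Jac f p)^T.
Proof. by rewrite /Jac trmxK /jacobian mul_rV_lin1. Qed.

Lemma diff_bform m (A : 'M[R]_m) u w0 :
  differentiable (fun w => bform A u w) w0 /\
  'd (fun w => bform A u w) w0 = (fun w => bform A u w) :> ('rV[R]_m -> R).
Proof.
have E : (fun w => bform A u w) = (fun w : 'rV[R]_m => (w *m (A^T *m u^T)) 0 0).
  by apply/funext => w; rewrite bform_tr /bform mulmxA.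
have dB : differentiable (fun w => bform A u w) w0.
  rewrite E; exact: differentiable_comp (diff_mulmxr _ w0).1 (differentiable_coord _ _ _).
split=> //; apply/funext => v; rewrite -(deriveE v dB).
have D : is_derive w0 v (fun w => bform A u w) (bform A u v).
  by apply: is_derive_linear => a x y; rewrite bformDr bformZr.
by case: D.
Qed.

Lemma qf_sum_fun n (A : 'M[R]_n) :
  qf A = \sum_(i < n) ((fun x : 'rV[R]_n => (x *m A) 0 i) * (fun x => x 0 i)).
Proof. by apply/funext => x; rewrite fct_sumE /= qf_bform bform_sum. Qed.

Lemma differentiable_qf n (A : 'M[R]_n) x : differentiable (qf A) x.
Proof.
rewrite qf_sum_fun; apply: differentiable_sum => i.
apply: differentiableM; last exact: differentiable_coord.
exact: differentiable_comp (diff_mulmxr A x).1 (differentiable_coord _ _ _).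
Qed.

Lemma diff_qf n (A : 'M[R]_n) x v : 'd (qf A) x v = bform A x v + bform A v x.
Proof.
have DA i : is_derive x v (fun y : 'rV[R]_n => (y *m A) 0 i) ((v *m A) 0 i).
  by apply: is_derive_linear => a u w; rewrite mulmxDl -scalemxAl !mxE.
have Dc i : is_derive x v (fun y : 'rV[R]_n => y 0 i) (v 0 i).
  by apply: is_derive_linear => a u w; rewrite !mxE.
have dA i : derivable (fun y : 'rV[R]_n => (y *m A) 0 i) x v by case: (DA i).
have dc i : derivable (fun y : 'rV[R]_n => y 0 i) x v by case: (Dc i).
rewrite -(deriveE v (differentiable_qf A x)) qf_sum_fun derive_sum; last first.
  by move=> i; apply: derivableM.
rewrite !bform_sum -big_split /=; apply: eq_bigr => i _.
rewrite (deriveM (dA i) (dc i)); case: (DA i) => _ ->; case: (Dc i) => _ -> /=.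
by rewrite /GRing.scale /= [in X in _ + X]mulrC.
Qed.

Lemma diff_qf_comp (V : normedModType R) n (A : 'M[R]_n) (g : V -> 'rV[R]_n) z v :
  differentiable g z ->
  differentiable (qf A \o g) z /\
  'd (qf A \o g) z v = bform A (g z) ('d g z v) + bform A ('d g z v) (g z).
Proof.
move=> dg; have dq := differentiable_qf A (g z).
split; first exact: differentiable_comp dg dq.
by rewrite (diff_comp dg dq) /= diff_qf.
Qed.

Lemma diff_lipschitz (V W : normedModType R) (f : V -> W) x v (L : R) :
  differentiable f x -> (forall a b, `|f a - f b| <= L * `|a - b|) ->
  `|'d f x v| <= L * `|v|.
Proof.
move=> df fL.
have dv : derivable f x v by apply: diff_derivable.
rewrite -(deriveE v df) /derive -lim_norm //.
apply: limr_le; first exact: (is_cvg_norm dv).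
near=> h.
have h0 : h != 0 by near: h; exact: nbhs_dnbhs_neq.
rewrite /= normrZ normfV.
apply: le_trans (_ : `|h|^-1 * (L * `|h *: v + x - x|) <= _).
  by rewrite ler_wpM2l ?invr_ge0 ?normr_ge0 // fL.
by rewrite addrK normrZ mulrCA mulKf ?normr_eq0.
Unshelve. all: by end_near. Qed.

Lemma diff_row_mx n1 n2 (W : normedModType R) (G : 'rV[R]_(n1 + n2) -> W)
  (x1 : 'rV[R]_n1) (x2 : 'rV[R]_n2) a b :
  (forall z, differentiable G z) ->
  differentiable (fun y => G (row_mx y x2)) x1 /\
  differentiable (fun y => G (row_mx x1 y)) x2 /\
  'd G (row_mx x1 x2) (row_mx a b) =
    'd (fun y => G (row_mx y x2)) x1 a + 'd (fun y => G (row_mx x1 y)) x2 b.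
Proof.
move=> dG.
pose M1 : 'M[R]_(n1, n1 + n2) := row_mx 1%:M 0.
pose M2 : 'M[R]_(n2, n1 + n2) := row_mx 0 1%:M.
have E1 : (fun y => G (row_mx y x2)) = G \o (fun y => y *m M1 + row_mx 0 x2).
  by apply/funext => y /=; rewrite mul_mx_row mulmx1 mulmx0 add_row_mx addr0 add0r.
have E2 : (fun y => G (row_mx x1 y)) = G \o (fun y => y *m M2 + row_mx x1 0).
  by apply/funext => y /=; rewrite mul_mx_row mulmx1 mulmx0 add_row_mx addr0 add0r.
have [da1 ea1] := diff_affine M1 (row_mx 0 x2) x1.
have [da2 ea2] := diff_affine M2 (row_mx x1 0) x2.
rewrite E1 E2; split; first exact: differentiable_comp da1 (dG _).
split; first exact: differentiable_comp da2 (dG _).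
rewrite (diff_comp da1 (dG _)) (diff_comp da2 (dG _)) /= ea1 ea2.
rewrite !mul_mx_row !mulmx1 !mulmx0 !add_row_mx !addr0 !add0r.
by rewrite -linearD /= add_row_mx addr0 add0r.
Qed.

End Calculus.

Section Rayleigh.
Variable R : realType.

Lemma nonneg_quadratic_linear0 (b c : R) : 0 <= c ->
  (forall t, 0 <= 2 * t * b + t ^+ 2 * c) -> b = 0.
Proof.
move=> c0 nonneg; have c1 : 0 < c + 1 by lra.
pose t := - b / (c + 1).
have tc : t * (c + 1) = - b by rewrite /t divfK // gt_eqF.
have h : 0 <= (2 * t * b + t ^+ 2 * c) * (c + 1) ^+ 2 by rewrite mulr_ge0 // sqr_ge0.
have expand : (2 * t * b + t ^+ 2 * c) * (c + 1) ^+ 2 =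
    2 * (t * (c + 1)) * b * (c + 1) + (t * (c + 1)) ^+ 2 * c by ring.
rewrite expand tc in h.
have hb : b * b * (c + 2) <= 0 by move: h; rewrite !expr2; nra.
by apply/eqP; rewrite -sqrf_eq0 eq_le sqr_ge0 andbT expr2; nra.
Qed.

Lemma inf_attained (E : set R) m : E m -> (forall a, E a -> m <= a) -> inf E = m.
Proof.
move=> Em lb; apply/eqP; rewrite eq_le; apply/andP; split.
  by apply: ge_inf => //; exists m.
by apply: lb_le_inf => //; exists m.
Qed.

Lemma sup_attained (E : set R) m : E m -> (forall a, E a -> a <= m) -> sup E = m.
Proof.
move=> Em ub; apply/eqP; rewrite eq_le; apply/andP; split.
  by apply: ge_sup => //; exists m.
by apply: sup_upper_bound => //; split; [exists m | exists m].
Qed.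

Lemma eig_qf n (A : 'M[R]_n) a w : w *m A = a *: w -> qf A w = a * sqnorm w.
Proof. by move=> Aw; rewrite /sqnorm /qf mulmx1 Aw -scalemxAl mxE. Qed.

(* Rayleigh principle: the minimum of x^T A x on the unit sphere (which exists by
   compactness) is an eigenvalue of the symmetric matrix A, attained at an eigenvector
   because the first variation of the Rayleigh quotient vanishes there. *)
Lemma rayleigh_min n (A : 'M[R]_n.+1) : A^T = A ->
  exists2 mu, eigenvalue A mu & forall x, mu * sqnorm x <= qf A x.
Proof.
move=> AT.
pose S := [set x : 'rV[R]_n.+1 | sqnorm x = 1].
have S0 : S !=set0.
  exists (delta_mx 0 ord0); rewrite /S /= sqnorm_sum (bigD1 ord0) //= big1.
    by rewrite !mxE /= expr1n addr0.
  by move=> i ni; rewrite mxE (negbTE ni) andbF expr0n.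
have cS : compact S.
  have Sbd : [bounded x | x in S].
    rewrite /bounded_near; near=> M.
    have M1 : 1 <= M by near: M; apply: nbhs_pinfty_ge; exact: num_real.
    move=> x /= Sx; have := sqnorm_ge x; rewrite Sx => x1.
    have := normr_ge0 x; move: x1; rewrite expr2 => *; nra.
  apply: (bounded_closed_compact Sbd).
  apply: (@preimage_closed _ _ (@sqnorm R n.+1) [set x : R | x = 1]);
    last exact: closed_eq.
  by move=> x _; apply: differentiable_continuous; exact: differentiable_qf.
have cq : {within S, continuous (qf A)}.
  apply: continuous_subspaceT => x; apply: differentiable_continuous.
  exact: differentiable_qf.
have [v Sv vmin] := EVT_min_rV S0 cS cq.
rewrite inE in Sv.
pose mu := qf A v.
have mu_min x : mu * sqnorm x <= qf A x.
  have [->|x0] := eqVneq x 0; first by rewrite /sqnorm !qf0 mulr0.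
  have ex := sqnorm_gt0 x0.
  pose s := Num.sqrt (sqnorm x).
  have s0 : 0 < s by rewrite sqrtr_gt0.
  have ss : s ^+ 2 = sqnorm x by rewrite sqr_sqrtr // ltW.
  have Sy : (s^-1 *: x) \in S.
    rewrite inE /S /= /sqnorm qfZ -/(sqnorm x) -ss exprVn mulVf //.
    by rewrite expf_neq0 // gt_eqF.
  have := vmin _ Sy; rewrite qfZ exprVn ss => h.
  by rewrite -ler_pdivlMr // mulrC.
exists mu => //.
apply/eigenvalueP; exists v; last first.
  apply/eqP => v0; move: Sv; rewrite v0 /S /= /sqnorm qf0 => /eqP.
  by rewrite eq_sym oner_eq0.
pose r := v *m A - mu *: v.
have first_variation w : bform A v w - mu * bform 1%:M v w = 0.
  apply: (@nonneg_quadratic_linear0 _ (qf A w - mu * sqnorm w)).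
    by rewrite subr_ge0 mu_min.
  move=> t; have := mu_min (v + t *: w).
  rewrite /sqnorm (qf_line _ _ _ AT) (qf_line _ _ _ (@trmx1 R n.+1)).
  rewrite -/(sqnorm v) -/(sqnorm w) Sv -/mu.
  set u := bform 1%:M v w; set k := bform A v w => h.
  have -> : 2 * t * (k - mu * u) + t ^+ 2 * (qf A w - mu * sqnorm w) =
    (mu + 2 * t * k + t ^+ 2 * qf A w) - mu * (1 + 2 * t * u + t ^+ 2 * sqnorm w) by ring.
  by rewrite subr_ge0.
have := first_variation r.
have -> : bform A v r - mu * bform 1%:M v r = sqnorm r.
  by rewrite /r /sqnorm qf_bform bformDl bformNl bformZl {3}/bform mulmx1.
move=> r0; have : r == 0 by apply/negPn/negP => /sqnorm_gt0; rewrite r0 ltxx.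
by rewrite subr_eq0 => /eqP.
Unshelve. all: by end_near. Qed.

(* Dimension 0 is degenerate: every bound below holds trivially there. *)
Lemma rv0 (x : 'rV[R]_0) : x = 0.
Proof. by rewrite thinmx0. Qed.

Lemma lambda_min_rayleigh n (Q : 'M[R]_n.+1) : Q^T = Q ->
  eigenvalue Q (lambda_min Q) /\ forall x, lambda_min Q * sqnorm x <= qf Q x.
Proof.
move=> QT; have [mu eig mu_min] := rayleigh_min QT.
suff -> : lambda_min Q = mu by [].
apply: inf_attained => // a /eigenvalueP [w Qw w0].
by have := mu_min w; rewrite (eig_qf Qw) ler_pM2r // sqnorm_gt0.
Qed.

Lemma lambda_min_bound n (Q : 'M[R]_n) : Q^T = Q ->
  forall x, lambda_min Q * sqnorm x <= qf Q x.
Proof.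
case: n Q => [|n] Q QT x; first by rewrite (rv0 x) /sqnorm !qf0 mulr0.
exact: (lambda_min_rayleigh QT).2.
Qed.

Lemma lambda_min_gt0 n (Q : 'M[R]_n.+1) : sym_pd Q -> 0 < lambda_min Q.
Proof.
move=> [QT Qpd]; have [/eigenvalueP [w Qw w0] _] := lambda_min_rayleigh QT.
by have := Qpd w w0; rewrite (eig_qf Qw) pmulr_lgt0 // sqnorm_gt0.
Qed.

(* ||P||_2 = lambda_max P bounds the quadratic form of a symmetric P from above;
   it is minus the smallest eigenvalue of -P. *)
Lemma norm2_bound n (P : 'M[R]_n) : P^T = P -> forall x, qf P x <= norm2 P * sqnorm x.
Proof.
case: n P => [|n] P PT x; first by rewrite (rv0 x) /sqnorm !qf0 mulr0.
have NT : (- P)^T = - P by rewrite linearN /= PT.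
have [mu eig mu_min] := rayleigh_min NT.
suff -> : norm2 P = - mu by have := mu_min x; rewrite qfN mulNr; lra.
apply: sup_attained.
  move/eigenvalueP: eig => [w Pw w0]; apply/eigenvalueP; exists w => //.
  by rewrite scaleNr -Pw mulmxN opprK.
move=> a /eigenvalueP [w Pw w0].
have := mu_min w; rewrite qfN (eig_qf Pw) => h.
rewrite -(ler_pM2r (sqnorm_gt0 w0)); lra.
Qed.

(* For positive definite P, ||P||_2 > 0 (test on a basis vector). *)
Lemma norm2_gt0 n (P : 'M[R]_n.+1) : sym_pd P -> 0 < norm2 P.
Proof.
move=> [PT Ppd]; pose w : 'rV[R]_n.+1 := delta_mx 0 ord0.
have w0 : w != 0.
  by apply/eqP => /matrixP /(_ 0 ord0); rewrite !mxE /= => /eqP; rewrite oner_eq0.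
have := lt_le_trans (Ppd w w0) (norm2_bound PT w).
by rewrite pmulr_lgt0 // sqnorm_gt0.
Qed.

Lemma rate_bound n (P Q : 'M[R]_n) : sym_pd P -> sym_pd Q ->
  forall x, lambda_min Q / norm2 P * qf P x <= qf Q x.
Proof.
case: n P Q => [|n] P Q Ppd Qpd x; first by rewrite (rv0 x) !qf0 mulr0.
have l0 := lambda_min_gt0 Qpd; have m0 := norm2_gt0 Ppd.
apply: le_trans (lambda_min_bound Qpd.1 x).
rewrite -mulrA; apply: ler_wpM2l; first exact: ltW.
by rewrite ler_pdivrMl // norm2_bound // Ppd.1.
Qed.

Lemma qf_coercive n (Q : 'M[R]_n) : sym_pd Q ->
  exists2 c, 0 < c & forall x, c * `|x| ^+ 2 <= qf Q x.
Proof.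
case: n Q => [|n] Q Qpd.
  by exists 1 => // x; rewrite (rv0 x) normr0 expr0n mulr0 qf0.
exists (lambda_min Q); first exact: lambda_min_gt0.
move=> x; apply: le_trans (lambda_min_bound Qpd.1 x).
by rewrite ler_wpM2l ?sqnorm_ge // ltW // lambda_min_gt0.
Qed.

Lemma wnorm_bound n (P : 'M[R]_n) : sym_pd P ->
  exists2 c, 0 <= c & forall x, wnorm P x <= c * `|x|.
Proof.
move=> Ppd; pose M := `|norm2 P| * n%:R.
have qM x : qf P x <= M * `|x| ^+ 2.
  apply: le_trans (norm2_bound Ppd.1 x) _.
  apply: le_trans (_ : `|norm2 P| * sqnorm x <= _).
    by rewrite ler_wpM2r ?sqnorm_ge0 // real_ler_norm // num_real.
  by rewrite -mulrA ler_wpM2l // sqnorm_le.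
exists (Num.sqrt M); first exact: sqrtr_ge0.
move=> x; apply: le_trans (ler_wsqrtr (qM x)) _.
by rewrite sqrtrM ?mulr_ge0 // sqrtr_sqr normr_id.
Qed.

Lemma lyapunov_decay n (P Q J : 'M[R]_n) : sym_pd P -> sym_pd Q ->
  loewner_le (P *m J + J^T *m P) (- Q) ->
  forall x, bform P x (x *m J^T) <= - (lambda_min Q / norm2 P / 2) * wnorm P x ^+ 2.
Proof.
move=> Ppd Qpd lyap x; rewrite bform_mulmx wnorm_sqr //.
have := lyap x; rewrite qf_lyapunov ?Ppd.1 // qfN.
have := rate_bound Ppd Qpd x; lra.
Qed.

(* Assembling the three estimates: with C <= nu a b for the cross term and the decay
   bounds for X and Y, 2 (C + X) + 2 theta Y is below the quadratic form of the theorem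
   for any larger coupling constant. *)
Lemma decay_combination (theta a b r1 r2 nu C X Y : R) :
  0 < theta -> 0 <= a -> 0 <= b -> C <= nu * a * b ->
  X <= - (r1 / 2) * b ^+ 2 -> Y <= - (r2 / 2) * a ^+ 2 ->
  2 * (C + X) + theta * (2 * Y) <=
  - (a * (theta * r2 * a - (nu + 1) * b) + b * (- (nu + 1) * a + r1 * b)).
Proof.
move=> theta0 a0 b0 CB XB YB.
have thetaY : theta * Y <= theta * (- (r2 / 2) * a ^+ 2).
  by apply: ler_wpM2l; [exact: ltW | exact: YB].
move: XB thetaY; rewrite !expr2; nra.
Qed.

End Rayleigh.

Section SteadyState.
Variable R : realType.

Lemma differentiable_partial2 n1 n2 m (f : 'rV[R]_n1 -> 'rV[R]_n2 -> 'rV[R]_m) :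
  (forall z, differentiable (uncurry2 f) z) -> forall x1 y, differentiable (f x1) y.
Proof.
move=> df x1 y; have [_ [dy _]] := diff_row_mx x1 y 0 0 df.
by move: dy; rewrite (_ : (fun y => uncurry2 f (row_mx x1 y)) = f x1) //;
  apply/funext => w; rewrite uncurry2_row.
Qed.

(* Mean value argument: if <d, Dg(y) d>_P <= -c |d|^2 uniformly, then g is strongly
   monotone for the P-pairing. *)
Lemma strongly_monotone n (P : 'M[R]_n) (g : 'rV[R]_n -> 'rV[R]_n) c y0 y1 :
  (forall y, differentiable g y) ->
  (forall y d, bform P d (d *m (Jac g y)^T) <= - c * `|d| ^+ 2) ->
  c * `|y1 - y0| ^+ 2 <= - bform P (y1 - y0) (g y1 - g y0).
Proof.
move=> dg gmono; set d := y1 - y0.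
pose phi := (fun w => bform P d w) \o g \o (fun s : R => s *: d + y0).
pose dphi := fun s : R => bform P d (d *m (Jac g (s *: d + y0))^T).
have Dphi s : differentiable phi s /\ 'd phi s 1 = dphi s.
  have [dl el] := diff_line d y0 s.
  have [db eb] := diff_bform P d (g (s *: d + y0)).
  have dc := differentiable_comp dl (dg _).
  split; first exact: differentiable_comp dc db.
  by rewrite (diff_comp dc db) /= (diff_comp dl (dg _)) /= el eb diff_Jac.
have [s _ mvt] : exists2 s, s \in `[0, 1]%R & phi 1 - phi 0 = dphi s * (1 - 0).
  apply: MVT_segment => //.
    move=> s _; have [ds es] := Dphi s.
    by split; [apply/derivable1_diffP | rewrite (deriveE _ ds) es].
  apply: continuous_subspaceT => s.
  exact: differentiable_continuous (Dphi s).1.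
have -> : bform P d (g y1 - g y0) = phi 1 - phi 0.
  by rewrite /phi /= scale1r scale0r add0r subrK bformDr bformNr.
by rewrite mvt subr0 mulr1 lerNr -mulNr; apply: gmono.
Qed.

Lemma le_div_of_sq (k M x : R) : 0 < k -> 0 <= x -> 0 <= M ->
  k * x ^+ 2 <= M * x -> x <= M / k.
Proof. by move=> k0 x0 M0 h; rewrite ler_pdivlMr // mulrC; move: h; rewrite expr2; nra. Qed.

Variables (n1 n2 : nat) (f2 : 'rV[R]_n1 -> 'rV[R]_n2 -> 'rV[R]_n2).
Variables (x2s : 'rV[R]_n1 -> 'rV[R]_n2) (P2 Q2 : 'M[R]_n2).
Hypothesis f2_diff : forall z, differentiable (uncurry2 f2) z.
Hypothesis f2_steady : forall x1, f2 x1 (x2s x1) = 0.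
Hypotheses (P2pd : sym_pd P2) (Q2pd : sym_pd Q2).
Hypothesis f2_lyap : forall x1 x2,
  loewner_le (P2 *m Jac2 f2 x1 x2 + (Jac2 f2 x1 x2)^T *m P2) (- Q2).

Lemma steady_state_error :
  exists2 K, 0 <= K & forall x1 x2, `|x2 - x2s x1| <= K * wnorm P2 (f2 x1 x2).
Proof.
have [cq cq0 cqQ] := qf_coercive Q2pd.
have [cp cp0 cpP] := wnorm_bound P2pd.
exists (cp / (cq / 2)); first by rewrite divr_ge0 // divr_ge0 // ltW.
move=> x1 x2; set d := x2 - x2s x1.
have mono : (cq / 2) * `|d| ^+ 2 <= - bform P2 d (f2 x1 x2 - f2 x1 (x2s x1)).
  apply: strongly_monotone => [|y u]; first exact: differentiable_partial2.
  have := f2_lyap x1 y u; rewrite qf_lyapunov ?P2pd.1 // qfN bform_mulmx.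
  have := cqQ u; rewrite /Jac2; lra.
rewrite f2_steady subr0 in mono.
rewrite mulrAC; apply: le_div_of_sq; rewrite ?divr_gt0 ?mulr_ge0 ?wnorm_ge0 //.
apply: le_trans mono _; apply: le_trans (ler_norm _) _.
rewrite normrN; apply: le_trans (cauchy_schwarz _ _ P2pd) _.
rewrite mulrC [cp * _]mulrC -mulrA; apply: ler_wpM2l; [exact: wnorm_ge0 | exact: cpP].
Qed.

Lemma steady_state_lipschitz L2 : 0 <= L2 ->
  (forall z z', `|uncurry2 f2 z - uncurry2 f2 z'| <= L2 * `|z - z'|) ->
  exists2 Ls, 0 <= Ls & forall y y', `|x2s y - x2s y'| <= Ls * `|y - y'|.
Proof.
move=> L20 f2L.
have [K K0 Kf2] := steady_state_error.
have [cp cp0 cpP] := wnorm_bound P2pd.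
exists (K * cp * L2); first by rewrite !mulr_ge0.
move=> y y'; apply: le_trans (Kf2 y' (x2s y)) _.
rewrite -!mulrA ler_wpM2l //.
have -> : f2 y' (x2s y) = f2 y' (x2s y) - f2 y (x2s y) by rewrite f2_steady subr0.
apply: le_trans (cpP _) _; rewrite ler_wpM2l //.
apply: le_trans (lipschitz2 L20 f2L _ _ _ _) _.
by rewrite subrr normr0 addr0 distrC.
Qed.

End SteadyState.

Section ReducedSystem.
Variable R : realType.

Definition reduced n1 n2 (f1 : 'rV[R]_n1 -> 'rV[R]_n2 -> 'rV[R]_n1)
  (x2s : 'rV[R]_n1 -> 'rV[R]_n2) (y : 'rV[R]_n1) : 'rV[R]_n1 := f1 y (x2s y).

Lemma reduced_differentiable n1 n2 (f1 : 'rV[R]_n1 -> 'rV[R]_n2 -> 'rV[R]_n1) x2s :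
  (forall z, differentiable (uncurry2 f1) z) -> (forall y, differentiable x2s y) ->
  forall y, differentiable (reduced f1 x2s) y.
Proof.
move=> df1 dxs y.
pose M1 : 'M[R]_(n1, n1 + n2) := row_mx 1%:M 0.
pose M2 : 'M[R]_(n2, n1 + n2) := row_mx 0 1%:M.
have -> : reduced f1 x2s = uncurry2 f1 \o (fun y => y *m M1 + x2s y *m M2).
  apply/funext => w /=; rewrite !mul_mx_row !mulmx1 !mulmx0 add_row_mx.
  by rewrite addr0 add0r uncurry2_row.
apply: differentiable_comp (df1 _).
apply: differentiableD; first exact: (diff_mulmxr M1 y).1.
exact: differentiable_comp (dxs y) (diff_mulmxr M2 (x2s y)).1.
Qed.

Lemma reduced_lipschitz n1 n2 (f1 : 'rV[R]_n1 -> 'rV[R]_n2 -> 'rV[R]_n1) x2s L1 Ls :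
  0 <= L1 -> (forall z z', `|uncurry2 f1 z - uncurry2 f1 z'| <= L1 * `|z - z'|) ->
  (forall y y', `|x2s y - x2s y'| <= Ls * `|y - y'|) ->
  forall y y', `|reduced f1 x2s y - reduced f1 x2s y'| <= L1 * (1 + Ls) * `|y - y'|.
Proof.
move=> L10 f1L xsL y y'; apply: le_trans (lipschitz2 L10 f1L _ _ _ _) _.
by rewrite -mulrA ler_wpM2l // mulrDl mul1r lerD2l.
Qed.

Lemma bform_diff_bound n (P : 'M[R]_n) (F : 'rV[R]_n -> 'rV[R]_n) LF c x y w :
  sym_pd P -> differentiable F x ->
  (forall a b, `|F a - F b| <= LF * `|a - b|) ->
  0 <= c -> (forall u, wnorm P u <= c * `|u|) ->
  `|bform P y ('d F x w)| <= wnorm P y * (c * (LF * `|w|)).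
Proof.
move=> Ppd dF FL c0 cP; apply: le_trans (cauchy_schwarz _ _ Ppd) _.
rewrite ler_wpM2l ?wnorm_ge0 //; apply: le_trans (cP _) _.
by rewrite ler_wpM2l // diff_lipschitz.
Qed.

(* The sensitivity correction cancels the x1-variation of f2:
   J1 u1 + J2 (f + S u1) = J2 f  with  S = - J2^-1 J1. *)
Lemma sensitivity_cancel n1 n2 (J1 : 'M[R]_(n2, n1)) (J2 : 'M[R]_n2)
  (u1 : 'rV[R]_n1) (f : 'rV[R]_n2) :
  J2 \in unitmx ->
  u1 *m J1^T + (f + ((- (invmx J2 *m J1)) *m u1^T)^T) *m J2^T = f *m J2^T.
Proof.
move=> J2u.
rewrite mulmxDl trmx_mul trmxK -mulmxA -trmx_mul mulmxN mulmxA mulmxV //.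
by rewrite mul1mx linearN /= mulmxN addrC -addrA addNr addr0.
Qed.

Variables (n1 n2 : nat).
Variables (f1 : 'rV[R]_n1 -> 'rV[R]_n2 -> 'rV[R]_n1) (f2 : 'rV[R]_n1 -> 'rV[R]_n2 -> 'rV[R]_n2).
Hypothesis f2_diff : forall z, differentiable (uncurry2 f2) z.
Hypothesis J2_unit : forall x1 x2, Jac2 f2 x1 x2 \in unitmx.

Lemma diff_f2_along_ps x1 x2 :
  'd (uncurry2 f2) (row_mx x1 x2) (ps_field f1 f2 (row_mx x1 x2)) =
  f2 x1 x2 *m (Jac2 f2 x1 x2)^T.
Proof.
rewrite /ps_field row_mxKl row_mxKr.
have [_ [_ ->]] := diff_row_mx x1 x2 (f1 x1 x2)
  (f2 x1 x2 + (sens f2 x1 x2 *m (f1 x1 x2)^T)^T) f2_diff.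
rewrite (_ : (fun y => uncurry2 f2 (row_mx y x2)) = (fun y => f2 y x2)); last first.
  by apply/funext => y; rewrite uncurry2_row.
rewrite (_ : (fun y => uncurry2 f2 (row_mx x1 y)) = (fun y => f2 x1 y)); last first.
  by apply/funext => y; rewrite uncurry2_row.
by rewrite !diff_Jac /sens sensitivity_cancel.
Qed.

Variables (x2s : 'rV[R]_n1 -> 'rV[R]_n2) (P1 : 'M[R]_n1) (P2 : 'M[R]_n2).
Hypothesis reduced_diff : forall y, differentiable (reduced f1 x2s) y.
Hypotheses (P1pd : sym_pd P1) (P2pd : sym_pd P2).

Lemma diff_V_along_ps theta x1 x2 :
  'd (Vfun P1 P2 f1 f2 x2s theta) (row_mx x1 x2) (ps_field f1 f2 (row_mx x1 x2)) =
  2 * bform P1 (reduced f1 x2s x1) ('d (reduced f1 x2s) x1 (f1 x1 x2)) +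
  theta * (2 * bform P2 (f2 x1 x2) (f2 x1 x2 *m (Jac2 f2 x1 x2)^T)).
Proof.
set z := row_mx x1 x2; set v := ps_field f1 f2 z; set F := reduced f1 x2s.
have -> : Vfun P1 P2 f1 f2 x2s theta =
    qf P1 \o (F \o @lsubmx R 1 n1 n2) + theta *: (qf P2 \o uncurry2 f2).
  by apply/funext => w; rewrite /Vfun /= !wnorm_sqr.
have dl : differentiable (F \o lsubmx) z.
  exact: differentiable_comp (differentiable_lsubmx z) (reduced_diff _).
have [dV1 eV1] := diff_qf_comp P1 v dl.
have [dV2 eV2] := diff_qf_comp P2 v (f2_diff z).
rewrite diffD ?diffZ //=; last exact: differentiableZ.
rewrite eV1 eV2 diff_f2_along_ps.
have -> : 'd (F \o lsubmx) z v = 'd F x1 (f1 x1 x2).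
  rewrite (diff_comp (differentiable_lsubmx z) (reduced_diff _)) /=.
  rewrite diff_lin; last exact: continuous_lsubmx.
  by rewrite /v /ps_field /z /= !row_mxKl row_mxKr.
have -> : (F \o lsubmx) z = F x1 by rewrite /= /z row_mxKl.
rewrite /z uncurry2_row.
rewrite [bform P1 ('d F x1 _) _](bform_sym _ _ P1pd.1).
by rewrite [bform P2 (_ *m _) _](bform_sym _ _ P2pd.1) !mulr2n !mulrDl !mul1r.
Qed.

End ReducedSystem.

Unset Implicit Arguments. Set Strict Implicit.

Theorem lemma2 (R : realType) (n1 n2 : nat)
  (f1 : 'rV[R]_n1 -> 'rV[R]_n2 -> 'rV[R]_n1)
  (f2 : 'rV[R]_n1 -> 'rV[R]_n2 -> 'rV[R]_n2)
  (x2s : 'rV[R]_n1 -> 'rV[R]_n2)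
  (P1 Q1 : 'M[R]_n1) (P2 Q2 : 'M[R]_n2) :
  C1_2 f1 -> C1_2 f2 ->
  (forall x1 x2, Jac2 f2 x1 x2 \in unitmx) ->
  locally_lipschitz (ps_field f1 f2) ->
  C1 x2s -> (forall x1, f2 x1 (x2s x1) = 0) ->
  globally_lipschitz (uncurry2 f1) -> globally_lipschitz (uncurry2 f2) ->
  sym_pd P1 -> sym_pd Q1 -> sym_pd P2 -> sym_pd Q2 ->
  (forall x1, loewner_le
     (P1 *m Jac (fun y => f1 y (x2s y)) x1 + (Jac (fun y => f1 y (x2s y)) x1)^T *m P1)
     (- Q1)) ->
  (forall x1 x2, loewner_le (P2 *m Jac2 f2 x1 x2 + (Jac2 f2 x1 x2)^T *m P2) (- Q2)) ->
  exists2 nu : R, 0 < nu &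
    forall theta : R, 0 < theta ->
    forall (x1 : 'rV[R]_n1) (x2 : 'rV[R]_n2),
      let z := row_mx x1 x2 in
      let a := wnorm P2 (f2 x1 x2) in
      let b := wnorm P1 (f1 x1 (x2s x1)) in
      'd (Vfun P1 P2 f1 f2 x2s theta) z (ps_field f1 f2 z) <=
      - (a * (theta * lambda_min Q2 / norm2 P2 * a - nu * b)
         + b * (- nu * a + lambda_min Q1 / norm2 P1 * b)).
Proof.
move=> [df1 _] [df2 _] J2u _ [dxs _] steady lip1 lip2 P1pd Q1pd P2pd Q2pd lyap1 lyap2.
have [L1 L10 f1L] := globally_lipschitz_ge0 lip1.
have [L2 L20 f2L] := globally_lipschitz_ge0 lip2.
have [K K0 err] := steady_state_error df2 steady P2pd Q2pd lyap2.
have [Ls Ls0 xsL] := steady_state_lipschitz df2 steady P2pd Q2pd lyap2 L20 f2L.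
have [c1 c10 c1P1] := wnorm_bound P1pd.
set F := reduced f1 x2s.
have dF : forall y, differentiable F y := reduced_differentiable df1 dxs.
pose nu0 := c1 * (L1 * (1 + Ls) * (L1 * K)).
have nu00 : 0 <= nu0 by rewrite !mulr_ge0 ?addr_ge0.
exists (nu0 + 1) => [|theta theta0 x1 x2 /=]; first by rewrite ltr_wpDl.
have cross : bform P1 (F x1) ('d F x1 (f1 x1 x2 - F x1)) <=
    nu0 * wnorm P2 (f2 x1 x2) * wnorm P1 (F x1).
  apply: le_trans (ler_norm _) _; rewrite [leRHS]mulrC.
  apply: le_trans (bform_diff_bound _ _ P1pd (dF x1)
    (reduced_lipschitz L10 f1L xsL) c10 c1P1) _.
  apply: ler_wpM2l; first exact: wnorm_ge0.
  have -> : nu0 * wnorm P2 (f2 x1 x2) =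
    c1 * (L1 * (1 + Ls) * (L1 * (K * wnorm P2 (f2 x1 x2)))) by rewrite /nu0; ring.
  apply: ler_wpM2l => //; apply: ler_wpM2l; first by rewrite mulr_ge0 ?addr_ge0.
  apply: le_trans (lipschitz2 L10 f1L _ _ _ _) _.
  by rewrite subrr normr0 add0r; apply: (ler_wpM2l L10); exact: err.
rewrite diff_V_along_ps // -[theta * _ / norm2 P2]mulrA.
rewrite -(subrK (F x1) (f1 x1 x2)) linearD bformDr (diff_Jac F x1 (F x1)).
apply: (decay_combination theta0 (wnorm_ge0 _ _) (wnorm_ge0 _ _) cross).
  exact: lyapunov_decay P1pd Q1pd (lyap1 x1) (F x1).
exact: lyapunov_decay P2pd Q2pd (lyap2 x1 x2) (f2 x1 x2).
Qed.
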